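(* Let $m\geq2$ be an integer. There is a constant $C_{\mathbb{K},m}\geq1$, not depending on $n$, such that for all $n\ge1$ and all $m$-homogeneous polynomials $P(x)=\sum_{|\alpha|=m}a_\alpha\mathbf{x}^\alpha$ on $\ell_m^n$, \[ \max_{|\alpha|=m}|a_\alpha|\leq C_{\mathbb{K},m}\|P\|, \] and the optimal such constants satisfy $C_{\mathbb{R},m}\le(\sqrt2)^{m-1}m^m$ and $C_{\mathbb{C},m}\le\big(\frac{2}{\sqrt\pi}\big)^{m-1}m^m$. Moreover, for every $r<\infty$ there is no constant $C$ independent of $n$ such that $\big(\sum_{|\alpha|=m}|a_\alpha|^r\big)^{1/r}\le C\|P\|$ for all $m$-homogeneous polynomials $P$ on $\ell_m^n$ and all $n$.
   Context: $\mathbb{K}$ denotes $\mathbb{R}$ or $\mathbb{C}$. For $\alpha\in\mathbb{N}^n$, $|\alpha|=\alpha_1+\cdots+\alpha_n$ and $\mathbf{x}^\alpha=x_1^{\alpha_1}\cdots x_n^{\alpha_n}$. $\ell_m^n$ is $\mathbb{K}^n$ with the $m$-norm, and $\|P\|=\sup\{|P(x)|:\|x\|_m\le1\}$. *)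

From Stdlib Require Import Reals List.
Import ListNotations.
Open Scope R_scope.

(* Scalars: complex numbers as pairs (re, im). The real field is the
   subset with im = 0 (selected by the boolean [isReal]). *)
Definition Cx := (R * R)%type.
Definition Cadd (z w : Cx) : Cx := (fst z + fst w, snd z + snd w).
Definition Cmul (z w : Cx) : Cx :=
  (fst z * fst w - snd z * snd w, fst z * snd w + snd z * fst w).
Definition C0 : Cx := (0, 0).
Definition C1 : Cx := (1, 0).
Fixpoint Cpow (z : Cx) (k : nat) : Cx :=
  match k with O => C1 | S k => Cmul z (Cpow z k) end.
Definition Cabs (z : Cx) : R := sqrt (fst z * fst z + snd z * snd z).

Definition inK (isReal : bool) (z : Cx) : Prop :=
  if isReal then snd z = 0 else True.

(* multi-indices alpha in N^n with |alpha| = m, as lists of length n *)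
Fixpoint multi_indices (n m : nat) : list (list nat) :=
  match n with
  | O => match m with O => [ [] ] | S _ => [] end
  | S n' => flat_map (fun k => map (cons k) (multi_indices n' (m - k)))
                     (seq 0 (S m))
  end.

Fixpoint monomial_from (x : nat -> Cx) (i : nat) (alpha : list nat) : Cx :=
  match alpha with
  | [] => C1
  | k :: al => Cmul (Cpow (x i) k) (monomial_from x (S i) al)
  end.
Definition monomial (x : nat -> Cx) (alpha : list nat) : Cx :=
  monomial_from x 0 alpha.

Definition hpoly_eval (n m : nat) (a : list nat -> Cx) (x : nat -> Cx) : Cx :=
  fold_right Cadd C0 (map (fun al => Cmul (a al) (monomial x al))
                          (multi_indices n m)).

Definition in_unit_ball (isReal : bool) (n m : nat) (x : nat -> Cx) : Prop :=
  (forall i, (i < n)%nat -> inK isReal (x i)) /\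
  sum_f_R0 (fun i => Cabs (x i) ^ m) (pred n) <= 1.

Definition is_poly_norm (isReal : bool) (n m : nat) (a : list nat -> Cx)
    (N : R) : Prop :=
  is_lub (fun y => exists x, in_unit_ball isReal n m x /\
                             y = Cabs (hpoly_eval n m a x)) N.

Definition coeffs_in_K (isReal : bool) (a : list nat -> Cx) : Prop :=
  forall al, inK isReal (a al).

Definition coeff_bound (isReal : bool) (m : nat) (C : R) : Prop :=
  forall (n : nat) (a : list nat -> Cx) (N : R),
    (1 <= n)%nat -> coeffs_in_K isReal a -> is_poly_norm isReal n m a N ->
    forall al, In al (multi_indices n m) -> Cabs (a al) <= C * N.

(* x^y for x >= 0, y > 0, with 0^y = 0 *)
Definition rpow (x y : R) : R := if Req_EM_T x 0 then 0 else Rpower x y.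

Definition coeff_lr_norm (n m : nat) (r : R) (a : list nat -> Cx) : R :=
  rpow (fold_right Rplus 0 (map (fun al => rpow (Cabs (a al)) r)
                                (multi_indices n m))) (/ r).

From Pilot Require Import Defs.
From Stdlib Require Import Reals List Lia Lra Factorial.
Import ListNotations.
Open Scope R_scope.

(* Fix a multi-index [al] with [|al| = m] and put [h = 1/m].  The mixed centered
   difference of step [h] and order [al_i] in the i-th real variable kills every
   monomial [x^bs] with [|bs| = m], [bs <> al] (some [bs_i < al_i]) and sends
   [x^al] to [(2h)^m al!].  It only samples [P] on the box [|y_i| <= al_i h],
   which lies in the unit ball of [l_m^n], and each difference at most doubles
   a sup bound; hence [|a_al| (2/m)^m <= 2^m ||P||], i.e. [|a_al| <= m^m ||P||],
   a constant below both of the stated ones.  Complex coefficients reduce to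
   this by taking real parts of [u P] on real points, with [|u| = 1] and
   [u a_al = |a_al|].  For the last claim, [x_1^m + ... + x_n^m] has norm at most
   [1] while its coefficient [l_r]-norm is [n^(1/r)]. *)

(** * Centered differences of polynomial functions *)

Fixpoint peval (cs : list R) (t : R) : R :=
  match cs with [] => 0 | c :: cs' => c + t * peval cs' t end.

Definition deg_lt (d : nat) (f : R -> R) : Prop :=
  exists cs, (length cs <= d)%nat /\ forall t, f t = peval cs t.

Lemma deg_lt_0 f t : deg_lt 0 f -> f t = 0.
Proof. intros [[|c cs] [Hl Hf]]; simpl in Hl; [now rewrite Hf | lia]. Qed.

Lemma deg_lt_mono d d' f : (d <= d')%nat -> deg_lt d f -> deg_lt d' f.
Proof. intros H [cs [Hl Hf]]. exists cs; split; [lia | auto]. Qed.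

Lemma deg_lt_ext d f g : (forall t, f t = g t) -> deg_lt d f -> deg_lt d g.
Proof. intros H [cs [Hl Hf]]. exists cs; split; auto. intros t; rewrite <- H; auto. Qed.

Lemma deg_lt_zero d : deg_lt d (fun _ => 0).
Proof. exists []; split; simpl; [lia | auto]. Qed.

Lemma deg_lt_const c : deg_lt 1 (fun _ => c).
Proof. exists [c]; split; simpl; [lia | intros; ring]. Qed.

Fixpoint padd (cs ds : list R) : list R :=
  match cs, ds with
  | [], _ => ds
  | _, [] => cs
  | c :: cs', d :: ds' => (c + d) :: padd cs' ds'
  end.

Lemma peval_padd cs ds t : peval (padd cs ds) t = peval cs t + peval ds t.
Proof.
  revert ds; induction cs as [|c cs IH]; intros [|d ds]; simpl; try rewrite IH; ring.
Qed.

Lemma length_padd cs ds d :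
  (length cs <= d)%nat -> (length ds <= d)%nat -> (length (padd cs ds) <= d)%nat.
Proof.
  revert ds d; induction cs as [|c cs IH]; intros [|e ds] [|d] H1 H2; simpl in *;
    auto; try lia.
  specialize (IH ds d). lia.
Qed.

Lemma deg_lt_add d f g : deg_lt d f -> deg_lt d g -> deg_lt d (fun t => f t + g t).
Proof.
  intros [cs [Hl Hf]] [ds [Hl' Hg]]. exists (padd cs ds).
  split; [now apply length_padd | intros t; now rewrite peval_padd, Hf, Hg].
Qed.

Lemma deg_lt_scal d c f : deg_lt d f -> deg_lt d (fun t => c * f t).
Proof.
  intros [cs [Hl Hf]]. exists (map (Rmult c) cs). rewrite length_map. split; auto.
  intros t. rewrite Hf. clear Hf Hl. induction cs; simpl; [ring | rewrite <- IHcs; ring].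
Qed.

Lemma deg_lt_sub d f g : deg_lt d f -> deg_lt d g -> deg_lt d (fun t => f t - g t).
Proof.
  intros Hf Hg. apply (deg_lt_ext d (fun t => f t + (-1) * g t)); [intros; ring |].
  apply deg_lt_add; [| apply deg_lt_scal]; auto.
Qed.

Lemma deg_lt_mulX d f : deg_lt d f -> deg_lt (S d) (fun t => t * f t).
Proof.
  intros [cs [Hl Hf]]. exists (0 :: cs). simpl. split; [lia | intros t; rewrite Hf; ring].
Qed.

Lemma deg_lt_pow a : deg_lt (S a) (fun t => t ^ a).
Proof. induction a; simpl; [apply deg_lt_const | now apply deg_lt_mulX]. Qed.

Lemma deg_lt_shift d f c : deg_lt d f -> deg_lt d (fun t => f (t + c)).
Proof.
  intros [cs [Hl Hf]]. apply deg_lt_mono with (length cs); auto.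
  apply (deg_lt_ext _ (fun t => peval cs (t + c))); [intros; now rewrite Hf |].
  clear Hf Hl. induction cs as [|c0 cs IH]; simpl; [apply deg_lt_zero |].
  apply (deg_lt_ext _ (fun t => (c0 + t * peval cs (t + c)) + c * peval cs (t + c)));
    [intros; ring |].
  apply deg_lt_add; [apply deg_lt_add |].
  - apply (deg_lt_mono 1); [lia | apply deg_lt_const].
  - now apply deg_lt_mulX.
  - apply (deg_lt_mono (length cs)); [lia | now apply deg_lt_scal].
Qed.

Lemma deg_lt_shift_pow a c : deg_lt a (fun t => (t + c) ^ a - t ^ a).
Proof.
  induction a as [|a IH]; simpl.
  - apply (deg_lt_ext _ (fun _ => 0)); [intros; ring | apply deg_lt_zero].
  - apply (deg_lt_ext _ (fun t => t * ((t + c) ^ a - t ^ a) + c * (((t + c) ^ a - t ^ a) + t ^ a)));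
      [intros; ring |].
    apply deg_lt_add; [now apply deg_lt_mulX |].
    apply deg_lt_scal, deg_lt_add; [apply (deg_lt_mono a); auto | apply deg_lt_pow].
Qed.

Lemma deg_lt_shift_pow_linear a c :
  deg_lt a (fun t => (t + c) ^ S a - t ^ S a - INR (S a) * c * t ^ a).
Proof.
  induction a as [|a IH].
  - apply (deg_lt_ext _ (fun _ => 0)); [intros; simpl; ring | apply deg_lt_zero].
  - apply (deg_lt_ext _ (fun t => t * ((t + c) ^ S a - t ^ S a - INR (S a) * c * t ^ a)
                                 + c * ((t + c) ^ S a - t ^ S a)));
      [intros t; rewrite !S_INR; simpl; ring |].
    apply deg_lt_add; [now apply deg_lt_mulX | apply deg_lt_scal, deg_lt_shift_pow].
Qed.

Section CenteredDifferences.
Variable h : R.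

Definition cdiff (f : R -> R) (t : R) : R := f (t + h) - f (t - h).

Lemma deg_lt_cdiff d f : deg_lt (S d) f -> deg_lt d (cdiff f).
Proof.
  intros [cs [Hl Hf]]. apply deg_lt_mono with (pred (length cs)); [lia |].
  apply (deg_lt_ext _ (cdiff (peval cs))); [intros t; unfold cdiff; now rewrite !Hf |].
  clear Hf Hl. induction cs as [|c0 [|c1 cs] IH]; unfold cdiff in *; simpl.
  - apply (deg_lt_ext _ (fun _ => 0)); [intros; ring | apply deg_lt_zero].
  - apply (deg_lt_ext _ (fun _ => 0)); [intros; ring | apply deg_lt_zero].
  - set (g := peval (c1 :: cs)) in *.
    (* Discrete product rule for [t * g t]. *)
    apply (deg_lt_ext _ (fun t => t * (g (t + h) - g (t - h)) + h * (g (t + h) + g (t + - h))));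
      [intros t; unfold g; simpl; unfold Rminus; ring |].
    apply deg_lt_add; [now apply deg_lt_mulX |].
    assert (Hg : deg_lt (length (c1 :: cs)) g) by (exists (c1 :: cs); auto).
    apply deg_lt_scal, deg_lt_add; apply deg_lt_shift; exact Hg.
Qed.

Lemma deg_lt_cdiff_pow a :
  deg_lt a (fun t => cdiff (fun u => u ^ S a) t - 2 * h * INR (S a) * t ^ a).
Proof.
  apply (deg_lt_ext _ (fun t => ((t + h) ^ S a - t ^ S a - INR (S a) * h * t ^ a)
      - ((t + - h) ^ S a - t ^ S a - INR (S a) * (- h) * t ^ a)));
    [intros t; unfold cdiff, Rminus; ring |].
  apply deg_lt_sub; apply deg_lt_shift_pow_linear.
Qed.

Fixpoint cdiff_iter (a : nat) (f : R -> R) : R -> R :=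
  match a with O => f | S a' => cdiff_iter a' (cdiff f) end.

Lemma cdiff_iter_ext a f g s :
  (forall t, f t = g t) -> cdiff_iter a f s = cdiff_iter a g s.
Proof.
  revert f g; induction a; intros f g H; simpl; auto.
  apply IHa. intros; unfold cdiff; now rewrite !H.
Qed.

Lemma cdiff_iter_scal a c f s : cdiff_iter a (fun t => c * f t) s = c * cdiff_iter a f s.
Proof.
  revert f; induction a; intros f; simpl; auto.
  rewrite <- IHa. apply cdiff_iter_ext. intros; unfold cdiff; ring.
Qed.

Lemma cdiff_iter_add a f g s :
  cdiff_iter a (fun t => f t + g t) s = cdiff_iter a f s + cdiff_iter a g s.
Proof.
  revert f g; induction a; intros f g; simpl; auto.
  rewrite <- IHa. apply cdiff_iter_ext. intros; unfold cdiff; ring.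
Qed.

Lemma cdiff_iter_deg_lt a f s : deg_lt a f -> cdiff_iter a f s = 0.
Proof.
  revert f; induction a; intros f H; simpl; [now apply deg_lt_0 |].
  apply IHa, deg_lt_cdiff, H.
Qed.

Lemma cdiff_iter_pow_lt a k s : (k < a)%nat -> cdiff_iter a (fun t => t ^ k) s = 0.
Proof. intros H. apply cdiff_iter_deg_lt, deg_lt_mono with (S k); [lia | apply deg_lt_pow]. Qed.

Lemma cdiff_iter_pow a s : cdiff_iter a (fun t => t ^ a) s = (2 * h) ^ a * INR (fact a).
Proof.
  induction a as [|a IH]; simpl; [lra |].
  rewrite (cdiff_iter_ext a _ (fun t => 2 * h * INR (S a) * t ^ a
             + (cdiff (fun u => u ^ S a) t - 2 * h * INR (S a) * t ^ a)))
    by (intros; simpl; ring).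
  rewrite cdiff_iter_add, cdiff_iter_scal, IH, (cdiff_iter_deg_lt a _ s (deg_lt_cdiff_pow a)).
  rewrite plus_INR, mult_INR, S_INR. ring.
Qed.

Lemma cdiff_iter_bound a f s M : 0 <= h ->
  (forall t, Rabs (t - s) <= INR a * h -> Rabs (f t) <= M) ->
  Rabs (cdiff_iter a f s) <= 2 ^ a * M.
Proof.
  intros Hh. revert f M; induction a as [|a IH]; intros f M Hf; simpl.
  - rewrite Rmult_1_l. apply Hf. rewrite Rminus_diag, Rabs_R0. simpl; lra.
  - replace (2 * 2 ^ a * M) with (2 ^ a * (2 * M)) by ring.
    apply IH. intros t Ht. rewrite S_INR in Hf. unfold cdiff.
    assert (Hp : Rabs (t + h - s) <= (INR a + 1) * h).
    { replace (t + h - s) with ((t - s) + h) by ring.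
      eapply Rle_trans; [apply Rabs_triang | rewrite (Rabs_right h); lra]. }
    assert (Hm : Rabs (t - h - s) <= (INR a + 1) * h).
    { replace (t - h - s) with ((t - s) + - h) by ring.
      eapply Rle_trans; [apply Rabs_triang | rewrite Rabs_Ropp, (Rabs_right h); lra]. }
    unfold Rminus at 1. eapply Rle_trans; [apply Rabs_triang |].
    rewrite Rabs_Ropp. pose proof (Hf _ Hp). pose proof (Hf _ Hm). lra.
Qed.

End CenteredDifferences.

(** * Mixed differences and coefficient extraction *)

Definition cons_fn (t : R) (y : nat -> R) : nat -> R :=
  fun i => match i with O => t | S i' => y i' end.

Fixpoint rmonomial (bs : list nat) (x : nat -> R) : R :=
  match bs with [] => 1 | k :: bs' => x O ^ k * rmonomial bs' (fun i => x (S i)) end.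

Definition rpoly (L : list (list nat)) (b : list nat -> R) (y : nat -> R) : R :=
  fold_right Rplus 0 (map (fun bs => b bs * rmonomial bs y) L).

Definition in_box (h : R) (al : list nat) (y : nat -> R) : Prop :=
  forall i, (i < length al)%nat -> Rabs (y i) <= INR (nth i al O) * h.

Fixpoint factprod (al : list nat) : R :=
  match al with [] => 1 | a :: al' => INR (fact a) * factprod al' end.

Lemma factprod_ge_1 al : 1 <= factprod al.
Proof.
  induction al as [|a al IH]; simpl; [lra |].
  assert (1 <= INR (fact a)) by (apply (le_INR 1); pose proof (lt_O_fact a); lia).
  nra.
Qed.

Section MixedDifferences.
Variable h : R.

Fixpoint mdiff (al : list nat) (G : (nat -> R) -> R) : R :=
  match al with
  | [] => G (fun _ => 0)
  | a :: al' => cdiff_iter h a (fun t => mdiff al' (fun y => G (cons_fn t y))) 0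
  end.

Lemma mdiff_ext al G1 G2 : (forall y, G1 y = G2 y) -> mdiff al G1 = mdiff al G2.
Proof.
  revert G1 G2; induction al; intros G1 G2 H; simpl; auto.
  apply cdiff_iter_ext. intros t. apply IHal. intros; apply H.
Qed.

Lemma mdiff_scal al c G : mdiff al (fun y => c * G y) = c * mdiff al G.
Proof.
  revert G; induction al; intros G; simpl; auto.
  rewrite <- cdiff_iter_scal. apply cdiff_iter_ext. intros t. apply IHal.
Qed.

Lemma mdiff_add al G1 G2 : mdiff al (fun y => G1 y + G2 y) = mdiff al G1 + mdiff al G2.
Proof.
  revert G1 G2; induction al; intros G1 G2; simpl; auto.
  rewrite <- cdiff_iter_add. apply cdiff_iter_ext. intros t. apply IHal.
Qed.

Lemma mdiff_rpoly al L b :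
  mdiff al (rpoly L b) = fold_right Rplus 0 (map (fun bs => b bs * mdiff al (rmonomial bs)) L).
Proof.
  unfold rpoly. induction L as [|bs L IH]; simpl.
  - rewrite (mdiff_ext al _ (fun _ => 0 * 0)), mdiff_scal by (intros; ring). ring.
  - now rewrite mdiff_add, mdiff_scal, IH.
Qed.

Lemma mdiff_cons_rmonomial a al k bs :
  mdiff (a :: al) (rmonomial (k :: bs))
  = cdiff_iter h a (fun t => t ^ k) 0 * mdiff al (rmonomial bs).
Proof.
  simpl. rewrite Rmult_comm, <- cdiff_iter_scal. apply cdiff_iter_ext. intros t.
  rewrite Rmult_comm, <- mdiff_scal. now apply mdiff_ext.
Qed.

(* [|bs| <= |al|] and [bs <> al] force some [bs_i < al_i], and the [al_i]-th
   difference kills [t ^ bs_i]. *)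
Lemma mdiff_rmonomial_neq al bs :
  length bs = length al -> (list_sum bs <= list_sum al)%nat -> bs <> al ->
  mdiff al (rmonomial bs) = 0.
Proof.
  revert bs; induction al as [|a al IH]; intros [|k bs] Hl Hs Hn;
    simpl in Hl, Hs; try congruence; try lia.
  rewrite mdiff_cons_rmonomial.
  destruct (Compare_dec.lt_dec k a) as [Hlt | Hge].
  - rewrite cdiff_iter_pow_lt by exact Hlt. ring.
  - rewrite IH by (lia || (intros ->; apply Hn; f_equal; lia)). ring.
Qed.

Lemma mdiff_rmonomial_diag al :
  mdiff al (rmonomial al) = (2 * h) ^ list_sum al * factprod al.
Proof.
  induction al as [|a al IH]; [simpl; ring |].
  rewrite mdiff_cons_rmonomial, cdiff_iter_pow, IH. simpl. rewrite pow_add. ring.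
Qed.

Lemma mdiff_bound al G M : 0 <= h ->
  (forall y, in_box h al y -> Rabs (G y) <= M) ->
  Rabs (mdiff al G) <= 2 ^ list_sum al * M.
Proof.
  intros Hh. revert G M; induction al as [|a al IH]; intros G M HG; simpl.
  - rewrite Rmult_1_l. apply HG. intros i Hi; simpl in Hi; lia.
  - rewrite pow_add, Rmult_assoc. apply cdiff_iter_bound; auto.
    intros t Ht. apply IH. intros y Hy. apply HG. intros [|i] Hi; simpl.
    + now rewrite Rminus_0_r in Ht.
    + apply Hy. simpl in Hi; lia.
Qed.

Lemma mdiff_rpoly_isolates al L b :
  (forall bs, In bs L -> length bs = length al /\ list_sum bs = list_sum al) ->
  mdiff al (rpoly L b)
  = b al * ((2 * h) ^ list_sum al * factprod al)
    * INR (count_occ (list_eq_dec Nat.eq_dec) L al).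
Proof.
  intros HL. rewrite mdiff_rpoly. induction L as [|bs L IH]; simpl; [ring |].
  rewrite IH by (intros; apply HL; now right).
  destruct (HL bs (or_introl eq_refl)) as [Hl Hs].
  destruct (list_eq_dec Nat.eq_dec bs al) as [-> | Hne].
  - rewrite mdiff_rmonomial_diag, S_INR. ring.
  - rewrite mdiff_rmonomial_neq by (auto; lia). ring.
Qed.

End MixedDifferences.

Lemma coeff_le_of_box_bound h al L b N : 0 < h -> In al L ->
  (forall bs, In bs L -> length bs = length al /\ list_sum bs = list_sum al) ->
  (forall y, in_box h al y -> Rabs (rpoly L b y) <= N) ->
  Rabs (b al) * h ^ list_sum al <= N.
Proof.
  intros Hh Hal HL HN.
  pose proof (mdiff_bound h al _ N (Rlt_le _ _ Hh) HN) as Hbound.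
  rewrite mdiff_rpoly_isolates, Rpow_mult_distr in Hbound by exact HL.
  set (k := list_sum al) in *.
  set (c := INR (count_occ (list_eq_dec Nat.eq_dec) L al)) in *.
  assert (Hc : 1 <= c).
  { apply (le_INR 1). apply (count_occ_In (list_eq_dec Nat.eq_dec)) in Hal. lia. }
  pose proof (factprod_ge_1 al) as Hfact.
  assert (H2 : 0 < 2 ^ k) by (apply pow_lt; lra).
  assert (Hhk : 0 < h ^ k) by (apply pow_lt; lra).
  assert (Hpos : 0 <= 2 ^ k * h ^ k * factprod al) by (apply Rmult_le_pos; nra).
  set (x := Rabs (b al) * (2 ^ k * h ^ k)).
  assert (Hx : 0 <= x) by (apply Rmult_le_pos; [apply Rabs_pos | nra]).
  replace (Rabs _) with (x * (factprod al * c)) in Hbound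
    by (rewrite Rabs_mult, Rabs_mult, (Rabs_right (_ * _ * _)), (Rabs_right c) by lra;
        unfold x; ring).
  assert (Hfc : 1 <= factprod al * c) by nra.
  assert (x <= x * (factprod al * c)) by nra.
  apply (Rmult_le_reg_l (2 ^ k)); [exact H2 |]. unfold x in *. lra.
Qed.

(** * Complex coefficients and the unit ball of l_m^n *)

Lemma Cabs_nonneg z : 0 <= Cabs z.
Proof. apply sqrt_pos. Qed.

Lemma Cabs_real r : Cabs (r, 0) = Rabs r.
Proof. unfold Cabs; simpl. rewrite Rmult_0_l, Rplus_0_r. apply sqrt_Rsqr_abs. Qed.

Lemma Cabs_C0 : Cabs Defs.C0 = 0.
Proof. unfold Defs.C0. rewrite Cabs_real. apply Rabs_R0. Qed.

Lemma Cabs_C1 : Cabs Defs.C1 = 1.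
Proof. unfold Defs.C1. rewrite Cabs_real. apply Rabs_R1. Qed.

Lemma Cabs_add z w : Cabs (Cadd z w) <= Cabs z + Cabs w.
Proof.
  destruct z as [z1 z2], w as [w1 w2]. unfold Cabs, Cadd; simpl.
  set (p := sqrt (z1 * z1 + z2 * z2)). set (q := sqrt (w1 * w1 + w2 * w2)).
  assert (Hp : p * p = z1 * z1 + z2 * z2) by (apply sqrt_sqrt; nra).
  assert (Hq : q * q = w1 * w1 + w2 * w2) by (apply sqrt_sqrt; nra).
  assert (p0 : 0 <= p) by apply sqrt_pos. assert (q0 : 0 <= q) by apply sqrt_pos.
  assert (Hcs : z1 * w1 + z2 * w2 <= p * q).
  { assert ((z1 * w1 + z2 * w2) * (z1 * w1 + z2 * w2) <= (p * q) * (p * q)).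
    { replace ((p * q) * (p * q)) with ((p * p) * (q * q)) by ring. rewrite Hp, Hq.
      pose proof (Rle_0_sqr (z1 * w2 - z2 * w1)). unfold Rsqr in *. nra. }
    assert (0 <= p * q) by nra. nra. }
  rewrite <- (sqrt_Rsqr (p + q)) by lra. apply sqrt_le_1_alt. unfold Rsqr. nra.
Qed.

Lemma Cabs_mul z w : Cabs (Cmul z w) = Cabs z * Cabs w.
Proof.
  destruct z as [z1 z2], w as [w1 w2]. unfold Cabs, Cmul; simpl.
  rewrite <- sqrt_mult by nra. f_equal. ring.
Qed.

Lemma Cabs_pow z k : Cabs (Cpow z k) = Cabs z ^ k.
Proof. induction k; simpl; [apply Cabs_C1 | now rewrite Cabs_mul, IHk]. Qed.

Lemma Rabs_fst_le_Cabs z : Rabs (fst z) <= Cabs z.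
Proof.
  unfold Cabs. rewrite <- sqrt_Rsqr_abs. apply sqrt_le_1_alt.
  unfold Rsqr. pose proof (Rle_0_sqr (snd z)). unfold Rsqr in *. lra.
Qed.

Lemma exists_unit_rotation z : exists u, Cabs u = 1 /\ fst (Cmul u z) = Cabs z.
Proof.
  destruct z as [x y]. set (c := Cabs (x, y)).
  assert (Hcc : c * c = x * x + y * y) by (apply sqrt_sqrt; nra).
  destruct (Req_EM_T c 0) as [Hc | Hc].
  - exists Defs.C1. split; [apply Cabs_C1 |]. simpl. rewrite Hc in *. nra.
  - exists (x / c, - y / c). unfold Cmul; simpl. split.
    + unfold Cabs; simpl. rewrite <- sqrt_1. f_equal.
      replace (x / c * (x / c) + - y / c * (- y / c)) with ((x * x + y * y) / (c * c))
        by (field; exact Hc).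
      rewrite <- Hcc. field. exact Hc.
    + replace (x / c * x - - y / c * y) with ((x * x + y * y) / c) by (field; exact Hc).
      rewrite <- Hcc. field. exact Hc.
Qed.

Lemma rmonomial_ext bs x y : (forall i, x i = y i) -> rmonomial bs x = rmonomial bs y.
Proof.
  revert x y; induction bs; intros x y H; simpl; auto.
  rewrite H. f_equal. apply IHbs. intros; apply H.
Qed.

Lemma Cpow_real r k : Cpow (r, 0) k = (r ^ k, 0).
Proof.
  induction k; simpl; [reflexivity |]. rewrite IHk. unfold Cmul; simpl. f_equal; ring.
Qed.

Lemma monomial_from_real y i bs :
  monomial_from (fun j => (y j, 0)) i bs = (rmonomial bs (fun j => y (i + j)%nat), 0).
Proof.
  revert i; induction bs as [|k bs IH]; intros i; simpl; [reflexivity |].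
  rewrite Cpow_real, IH. unfold Cmul; simpl. rewrite Nat.add_0_r. f_equal; [| ring].
  rewrite (rmonomial_ext bs (fun j => y (i + S j)%nat) (fun j => y (S (i + j))))
    by (intros; f_equal; lia).
  ring.
Qed.

Lemma monomial_real y bs : monomial (fun j => (y j, 0)) bs = (rmonomial bs y, 0).
Proof. unfold monomial. now rewrite monomial_from_real. Qed.

Lemma fst_Cmul_hpoly_eval_real u n m a y :
  fst (Cmul u (hpoly_eval n m a (fun j => (y j, 0))))
  = rpoly (multi_indices n m) (fun bs => fst (Cmul u (a bs))) y.
Proof.
  unfold hpoly_eval, rpoly.
  induction (multi_indices n m) as [|bs L IH]; cbn [map fold_right].
  - unfold Defs.C0, Cmul; simpl; ring.
  - rewrite <- IH, monomial_real. unfold Cadd, Cmul; simpl. ring.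
Qed.

Lemma multi_indices_spec n m bs :
  In bs (multi_indices n m) -> length bs = n /\ list_sum bs = m.
Proof.
  revert m bs; induction n as [|n IH]; intros m bs H.
  - destruct m; simpl in H; [destruct H as [<- | []]; auto | contradiction].
  - apply in_flat_map in H. destruct H as [k [Hk H]]. apply in_seq in Hk.
    apply in_map_iff in H. destruct H as [bs' [<- H]]. apply IH in H. simpl. lia.
Qed.

Lemma nth_le_list_sum al i : (nth i al O <= list_sum al)%nat.
Proof. revert i; induction al; intros [|i]; simpl; try lia. specialize (IHal i); lia. Qed.

Lemma sum_f_R0_nth al : al <> [] ->
  sum_f_R0 (fun i => INR (nth i al O)) (pred (length al)) = INR (list_sum al).
Proof.
  induction al as [|a [|b al] IH]; intros Hne; [congruence | simpl; now rewrite Nat.add_0_r |].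
  simpl length in *. rewrite decomp_sum by lia. simpl pred in *. simpl nth in IH |- *.
  rewrite (IH ltac:(discriminate)), <- plus_INR. reflexivity.
Qed.

(* Since [al_i / m <= 1], the box [|y_i| <= al_i / m] satisfies
   [sum |y_i|^m <= sum al_i / m = 1]. *)
Lemma in_unit_ball_of_box isReal m al y : (1 <= m)%nat -> al <> [] -> list_sum al = m ->
  in_box (/ INR m) al y -> in_unit_ball isReal (length al) m (fun i => (y i, 0)).
Proof.
  intros Hm Hne Hs Hy. split; [intros i _; destruct isReal; simpl; auto |].
  assert (HmR : 0 < INR m) by (apply lt_0_INR; lia).
  apply Rle_trans with (sum_f_R0 (fun i => INR (nth i al O) * / INR m) (pred (length al))).
  - apply sum_Rle. intros i Hi. rewrite Cabs_real.
    set (x := INR (nth i al O) * / INR m).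
    assert (Hx : 0 <= x <= 1).
    { assert (INR (nth i al O) <= INR m) by (apply le_INR; rewrite <- Hs; apply nth_le_list_sum).
      pose proof (pos_INR (nth i al O)). unfold x. split.
      - apply Rmult_le_pos; [lra | left; now apply Rinv_0_lt_compat].
      - apply (Rmult_le_reg_r (INR m)); [exact HmR |].
        rewrite Rmult_assoc, Rinv_l by lra. lra. }
    apply Rle_trans with (x ^ m).
    + apply pow_incr. split; [apply Rabs_pos | apply Hy].
      destruct al; [congruence | simpl in Hi |- *; lia].
    + destruct m as [|k]; [lia |]. simpl.
      assert (x ^ k <= 1) by (rewrite <- (pow1 k); apply pow_incr; lra).
      assert (0 <= x ^ k) by (apply pow_le; lra). nra.
  - rewrite <- scal_sum, sum_f_R0_nth, Hs, Rinv_l by (auto; lra). lra.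
Qed.

Lemma Cabs_coeff_le_norm isReal n m a N al : (1 <= m)%nat -> is_poly_norm isReal n m a N ->
  In al (multi_indices n m) -> Cabs (a al) <= INR m ^ m * N.
Proof.
  intros Hm [HN _] Hal.
  destruct (multi_indices_spec _ _ _ Hal) as [Hlen Hsum].
  assert (HmR : 0 < INR m) by (apply lt_0_INR; lia).
  destruct (exists_unit_rotation (a al)) as [u [Hu Hua]].
  assert (Hbox : Cabs (a al) * (/ INR m) ^ list_sum al <= N).
  { rewrite <- Hua, <- (Rabs_right (fst _)) by (rewrite Hua; apply Rle_ge, Cabs_nonneg).
    apply (coeff_le_of_box_bound _ al (multi_indices n m) (fun bs => fst (Cmul u (a bs))));
      [now apply Rinv_0_lt_compat | exact Hal |
       intros bs Hbs; apply multi_indices_spec in Hbs; lia |].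
    intros y Hy. rewrite <- fst_Cmul_hpoly_eval_real.
    eapply Rle_trans; [apply Rabs_fst_le_Cabs |]. rewrite Cabs_mul, Hu, Rmult_1_l.
    apply HN. eexists; split; [| reflexivity].
    rewrite <- Hlen. apply in_unit_ball_of_box; auto.
    destruct al; simpl in Hsum; [lia | discriminate]. }
  rewrite Hsum, pow_inv in Hbox.
  assert (Hmm : 0 < INR m ^ m) by (apply pow_lt; lra).
  apply (Rmult_le_reg_r (/ INR m ^ m)); [now apply Rinv_0_lt_compat |].
  rewrite Rmult_assoc, (Rmult_comm N), <- Rmult_assoc, Rinv_r, Rmult_1_l by lra. exact Hbox.
Qed.

Lemma coeff_bound_of_ge isReal m C : (1 <= m)%nat -> INR m ^ m <= C -> coeff_bound isReal m C.
Proof.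
  intros Hm HC n a N _ _ HN al Hal.
  pose proof (Cabs_coeff_le_norm _ _ _ _ _ _ Hm HN Hal) as Hle.
  assert (Hmm : 0 < INR m ^ m) by (apply pow_lt, lt_0_INR; lia).
  assert (0 <= N) by (pose proof (Cabs_nonneg (a al)); nra).
  nra.
Qed.

(** * Unboundedness of the coefficient l_r-norms *)

(* The polynomial [x_1^m + ... + x_n^m]: a multi-index is pure when exactly one
   of its entries is nonzero. *)
Fixpoint support_size (bs : list nat) : nat :=
  match bs with
  | [] => O
  | k :: bs' => ((if Nat.eqb k 0 then 0 else 1) + support_size bs')%nat
  end.

Definition is_pure (bs : list nat) : bool := Nat.eqb (support_size bs) 1.

Definition pure_powers (bs : list nat) : Cx := if is_pure bs then Defs.C1 else Defs.C0.

Lemma pure_powers_in_K isReal : coeffs_in_K isReal pure_powers.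
Proof. intros bs. unfold pure_powers. destruct (is_pure bs), isReal; simpl; auto. Qed.

Lemma multi_indices_0 n : multi_indices n 0 = [repeat O n].
Proof. induction n as [|n IH]; simpl; [reflexivity | now rewrite IH]. Qed.

Lemma support_size_pos bs : (1 <= list_sum bs)%nat -> (1 <= support_size bs)%nat.
Proof.
  induction bs as [|k bs IH]; simpl; intros H; [lia |].
  destruct (Nat.eqb_spec k 0); [subst; simpl in H; specialize (IH H) |]; lia.
Qed.

Lemma support_size_repeat_0 n : support_size (repeat O n) = O.
Proof. induction n; simpl; auto. Qed.

(* Entry [0] contributes the pure indices of [n] variables, entry [m] the index
   [m, 0, ..., 0], and any entry in between leaves a positive remainder, which
   needs a second nonzero entry. *)
Lemma filter_pure_multi_indices_S n m : (1 <= m)%nat ->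
  filter is_pure (multi_indices (S n) m) =
  map (cons O) (filter is_pure (multi_indices n m)) ++ [m :: repeat O n].
Proof.
  intros Hm. destruct m as [|m]; [lia |].
  set (f := fun k => map (cons k) (multi_indices n (S m - k))).
  change (multi_indices (S n) (S m)) with (flat_map f (seq 0 (S (S m)))).
  replace (seq 0 (S (S m))) with (0%nat :: seq 1 m ++ [S m]) by (simpl; now rewrite <- seq_S).
  cbn [flat_map]. rewrite flat_map_app. cbn [flat_map]. rewrite !filter_app.
  assert (Hmid : filter is_pure (flat_map f (seq 1 m)) = []).
  { destruct (filter is_pure (flat_map f (seq 1 m))) as [|bs l] eqn:E; [reflexivity |].
    assert (Hbs : In bs (filter is_pure (flat_map f (seq 1 m)))) by (rewrite E; now left).
    apply filter_In in Hbs. destruct Hbs as [Hbs Hpure].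
    apply in_flat_map in Hbs. destruct Hbs as [k [Hk Hbs]]. apply in_seq in Hk.
    apply in_map_iff in Hbs. destruct Hbs as [bs' [<- Hbs']].
    apply multi_indices_spec in Hbs'. destruct Hbs' as [_ Hs].
    assert (1 <= support_size bs')%nat by (apply support_size_pos; lia).
    unfold is_pure in Hpure. simpl in Hpure. apply Nat.eqb_eq in Hpure.
    destruct (Nat.eqb_spec k 0); [lia |]. simpl in Hpure. lia. }
  rewrite Hmid. unfold f. rewrite Nat.sub_0_r, Nat.sub_diag, multi_indices_0, filter_map_swap.
  simpl. unfold is_pure at 2. simpl. rewrite support_size_repeat_0. reflexivity.
Qed.

Lemma length_filter_pure_multi_indices n m : (1 <= m)%nat ->
  length (filter is_pure (multi_indices n m)) = n.
Proof.
  intros Hm. induction n as [|n IH].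
  - destruct m; [lia | reflexivity].
  - rewrite filter_pure_multi_indices_S, length_app, length_map, IH by exact Hm. simpl; lia.
Qed.

Lemma rmonomial_repeat_0 k w : rmonomial (repeat O k) w = 1.
Proof. revert w; induction k as [|k IH]; intros w; simpl; [| rewrite IH]; ring. Qed.

Lemma sum_rmonomial_pure_multi_indices m n w : (1 <= m)%nat ->
  fold_right Rplus 0 (map (fun bs => rmonomial bs w) (filter is_pure (multi_indices (S n) m)))
  = sum_f_R0 (fun i => w i ^ m) n.
Proof.
  intros Hm. revert w; induction n as [|n IH]; intros w;
    rewrite filter_pure_multi_indices_S, map_app, fold_right_app by exact Hm.
  - destruct m; [lia |]. simpl. ring.
  - rewrite decomp_sum by lia. simpl pred. rewrite <- IH, map_map.
    cbn [map fold_right rmonomial]. rewrite rmonomial_repeat_0.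
    clear IH. induction (filter is_pure (multi_indices (S n) m)) as [|bs l IHl];
      cbn [map fold_right rmonomial pow] in *; [ring | rewrite IHl; ring].
Qed.

Lemma sum_rpow_pure_powers r L :
  fold_right Rplus 0 (map (fun bs => rpow (Cabs (pure_powers bs)) r) L)
  = INR (length (filter is_pure L)).
Proof.
  induction L as [|bs L IH]; [reflexivity |].
  cbn [map fold_right filter]. rewrite IH. unfold pure_powers.
  destruct (is_pure bs); unfold rpow.
  - rewrite Cabs_C1. destruct (Req_EM_T 1 0); [lra |].
    unfold Rpower. rewrite ln_1, Rmult_0_r, exp_0. simpl length. rewrite S_INR. ring.
  - rewrite Cabs_C0. destruct (Req_EM_T 0 0); [ring | lra].
Qed.

Lemma coeff_lr_norm_pure_powers n m r : (1 <= m)%nat ->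
  coeff_lr_norm n m r pure_powers = rpow (INR n) (/ r).
Proof.
  intros Hm. unfold coeff_lr_norm.
  now rewrite sum_rpow_pure_powers, length_filter_pure_multi_indices.
Qed.

Lemma Cabs_monomial_from x i bs :
  Cabs (monomial_from x i bs) = rmonomial bs (fun j => Cabs (x (i + j)%nat)).
Proof.
  revert i; induction bs as [|k bs IH]; intros i; simpl; [apply Cabs_C1 |].
  rewrite Cabs_mul, Cabs_pow, IH, Nat.add_0_r. f_equal.
  apply rmonomial_ext. intros j. now rewrite Nat.add_succ_r.
Qed.

Lemma Cabs_monomial x bs : Cabs (monomial x bs) = rmonomial bs (fun j => Cabs (x j)).
Proof. apply Cabs_monomial_from. Qed.

Lemma Cabs_hpoly_eval_pure_powers_le n m x : (1 <= m)%nat ->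
  Cabs (hpoly_eval (S n) m pure_powers x) <= sum_f_R0 (fun i => Cabs (x i) ^ m) n.
Proof.
  intros Hm. unfold hpoly_eval. rewrite <- sum_rmonomial_pure_multi_indices by exact Hm.
  induction (multi_indices (S n) m) as [|bs L IH]; cbn [map fold_right filter].
  - rewrite Cabs_C0; lra.
  - eapply Rle_trans; [apply Cabs_add |]. rewrite Cabs_mul, Cabs_monomial.
    unfold pure_powers at 1. destruct (is_pure bs); cbn [map fold_right];
      [rewrite Cabs_C1 | rewrite Cabs_C0]; lra.
Qed.

Lemma pure_powers_norm isReal n m : (1 <= m)%nat ->
  exists N, is_poly_norm isReal (S n) m pure_powers N /\ 0 <= N <= 1.
Proof.
  intros Hm.
  set (E := fun y => exists x, in_unit_ball isReal (S n) m x /\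
                               y = Cabs (hpoly_eval (S n) m pure_powers x)).
  assert (Hub : is_upper_bound E 1).
  { intros y [x [[_ Hx] ->]]. eapply Rle_trans; [now apply Cabs_hpoly_eval_pure_powers_le |].
    exact Hx. }
  assert (H0 : E (Cabs (hpoly_eval (S n) m pure_powers (fun _ => Defs.C0)))).
  { eexists; split; [| reflexivity]. split.
    - intros i _. destruct isReal; simpl; auto.
    - simpl pred. rewrite Cabs_C0, pow_i, sum_cte by lia. lra. }
  destruct (completeness E (ex_intro _ 1 Hub) (ex_intro _ _ H0)) as [N HN].
  exists N. split; [exact HN | split].
  - eapply Rle_trans; [apply Cabs_nonneg | apply HN, H0].
  - now apply HN.
Qed.

Lemma no_uniform_lr_coeff_bound isReal m r : (1 <= m)%nat -> 0 < r ->
  ~ exists C : R, forall (n : nat) (a : list nat -> Cx) (N : R),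
      coeffs_in_K isReal a -> is_poly_norm isReal n m a N ->
      coeff_lr_norm n m r a <= C * N.
Proof.
  intros Hm Hr [C HC].
  set (M := Rmax C 0 + 1).
  assert (HM : 0 < M) by (unfold M; pose proof (Rmax_r C 0); lra).
  destruct (INR_unbounded (Rpower M r)) as [n Hn].
  assert (Hz : 0 < Rpower M r) by apply exp_pos.
  destruct n as [|n]; [simpl in Hn; lra |].
  destruct (pure_powers_norm isReal n m Hm) as [N [HN [HN0 HN1]]].
  specialize (HC (S n) pure_powers N (pure_powers_in_K isReal) HN).
  rewrite coeff_lr_norm_pure_powers in HC by exact Hm.
  unfold rpow in HC. destruct (Req_EM_T (INR (S n)) 0) as [E0 | _]; [lra |].
  assert (Hlt : Rpower (Rpower M r) (/ r) < Rpower (INR (S n)) (/ r))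
    by (apply Rlt_Rpower_l; [now apply Rinv_0_lt_compat | lra]).
  rewrite Rpower_mult, Rinv_r, Rpower_1 in Hlt by lra.
  assert (C * N <= Rmax C 0).
  { destruct (Rle_or_lt 0 C).
    - rewrite Rmax_left by lra. nra.
    - rewrite Rmax_right by lra. nra. }
  unfold M in Hlt. lra.
Qed.

Lemma pow_mul_ge x m : 1 <= x -> INR m ^ m <= x ^ (m - 1) * INR m ^ m.
Proof.
  intros Hx. assert (1 <= x ^ (m - 1)) by now apply pow_R1_Rle.
  assert (0 <= INR m ^ m) by apply pow_le, pos_INR. nra.
Qed.

Theorem theorem4 (m : nat) (hm : (2 <= m)%nat) :
  (forall isReal : bool, exists C : R, 1 <= C /\ coeff_bound isReal m C) /\
  coeff_bound true m (sqrt 2 ^ (m - 1) * INR m ^ m) /\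
  coeff_bound false m ((2 / sqrt PI) ^ (m - 1) * INR m ^ m) /\
  (forall (isReal : bool) (r : R), 0 < r ->
     ~ exists C : R, forall (n : nat) (a : list nat -> Cx) (N : R),
         coeffs_in_K isReal a -> is_poly_norm isReal n m a N ->
         coeff_lr_norm n m r a <= C * N).
Proof.
  assert (Hm : (1 <= m)%nat) by lia.
  assert (Hsqrt2 : 1 <= sqrt 2) by (rewrite <- sqrt_1; apply sqrt_le_1_alt; lra).
  assert (Hpi : 1 <= 2 / sqrt PI).
  { assert (Hs : 0 < sqrt PI) by apply sqrt_lt_R0, PI_RGT_0.
    assert (sqrt PI <= 2).
    { rewrite <- (sqrt_Rsqr 2) by lra. apply sqrt_le_1_alt. unfold Rsqr. pose proof PI_4. lra. }
    apply (Rmult_le_reg_r (sqrt PI)); [exact Hs |].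
    unfold Rdiv. rewrite Rmult_assoc, Rinv_l by lra. lra. }
  split; [| split; [| split]].
  - intros isReal. exists (INR m ^ m). split.
    + apply pow_R1_Rle, (le_INR 1); exact Hm.
    + apply coeff_bound_of_ge; [exact Hm | lra].
  - apply coeff_bound_of_ge, pow_mul_ge; assumption.
  - apply coeff_bound_of_ge, pow_mul_ge; assumption.
  - intros isReal r Hr. now apply no_uniform_lr_coeff_bound.
Qed.
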